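(* Let $R$ be an associative ring with identity, let $\mathscr{X}$ be a class of left $R$-modules, and let $n\geq 1$ be an integer such that $\mathscr{X}_n$ is nonempty. Then $R$ is left $n$-$\mathscr{X}$-coherent if and only if every right $R$-module has an $n$-$\mathscr{X}$-flat preenvelope.
   Context: A module $M$ is $m$-presented if there is an exact sequence $F_m\to\cdots\to F_0\to M\to 0$ with each $F_i$ finitely generated free. $\mathscr{X}_n$ denotes the class of $n$-presented modules in $\mathscr{X}$. $R$ is left $n$-$\mathscr{X}$-coherent if $\mathscr{X}_n\neq\emptyset$ and every module in $\mathscr{X}_n$ is $(n+1)$-presented. A right $R$-module $M$ is $n$-$\mathscr{X}$-flat if $\mathrm{Tor}^R_n(M,N)=0$ for all $N\in\mathscr{X}_n$. An $n$-$\mathscr{X}$-flat preenvelope of a right module $M$ is a homomorphism $\varphi:M\to F$ with $F$ an $n$-$\mathscr{X}$-flat right module such that for every homomorphism $\varphi':M\to F'$ with $F'$ $n$-$\mathscr{X}$-flat there exists $f:F\to F'$ with $\varphi'=f\varphi$. *)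

From HB Require Import structures.
From mathcomp Require Import all_boot all_order all_algebra.
Set Implicit Arguments. Unset Strict Implicit. Unset Printing Implicit Defensive.
Import GRing.Theory.
Local Open Scope ring_scope.

(* Conventions.
   - R : pzRingType is an associative ring with identity.
   - A left R-module is an [lmodType R]; a right R-module is an
     [lmodType R^c] (scaling [r *: m] in [R^c] is the right action m.r).
   - The finitely generated free left module R^k is the row space 'rV[R]_k
     (left action: entrywise left multiplication); a left-linear map
     R^a -> R^b is right multiplication [v |-> v *m A] by A : 'M[R]_(a,b);
     a linear map R^k -> N is [v |-> \sum_j v 0 j *: g j] for generators g. *)

(* An m-presentation  F_m -> ... -> F_1 -> F_0 -> N -> 0  of a left module N,
   with F_i = R^(k i), the map F_(i+1) -> F_i given by A i, exact at N and at
   F_0, ..., F_(m-1). *)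
Record presentation (R : pzRingType) (N : lmodType R) (m : nat) := Presentation {
  pres_k : nat -> nat;
  pres_A : forall i : nat, 'M[R]_(pres_k i.+1, pres_k i);
  pres_g : 'I_(pres_k 0) -> N;
  pres_surj : forall y : N, exists v : 'rV[R]_(pres_k 0),
      y = \sum_j v 0 j *: pres_g j;
  pres_exact0 : (0 < m)%N -> forall v : 'rV[R]_(pres_k 0),
      (\sum_j v 0 j *: pres_g j = 0) <-> exists w, v = w *m pres_A 0;
  pres_exact : forall i : nat, (i.+2 <= m)%N -> forall v : 'rV[R]_(pres_k i.+1),
      (v *m pres_A i = 0) <-> exists w, v = w *m pres_A i.+1
}.

Definition n_presented (R : pzRingType) (N : lmodType R) (m : nat) : Prop :=
  inhabited (presentation N m).

Definition in_Xn (R : pzRingType) (X : lmodType R -> Prop) (n : nat)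
  (N : lmodType R) : Prop := X N /\ n_presented N n.

Definition left_n_X_coherent (R : pzRingType) (X : lmodType R -> Prop)
  (n : nat) : Prop :=
  (exists N : lmodType R, in_Xn X n N) /\
  forall N : lmodType R, in_Xn X n N -> n_presented N n.+1.

(* Tor_n^R(M, N) = 0 for n >= 1, a right module M and a left module N given
   with an n-presentation P, computed as the n-th homology of M (x) F_*, where
   F_* is the free resolution  ... -> F_(n+1) -> F_n -> ... -> F_0 -> N
   extending P by F_(n+1) = free module on K = ker(F_n -> F_(n-1)).
   Under M (x) R^k = M^k, the map M (x) F_n -> M (x) F_(n-1) sends
   x to (j |-> \sum_l x_l . A_(l j)), and the image of M (x) F_(n+1) in
   M (x) F_n = M^k is the additive span of the elements (l |-> m . a_l),
   m in M, a in K.  (Only meaningful for n >= 1, where F_n = R^(k (n.-1).+1).) *)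
Definition Tor_vanishes (R : pzRingType) (n : nat) (M : lmodType R^c)
  (N : lmodType R) (P : presentation N n) : Prop :=
  let k := pres_k P in let A := pres_A P in
  forall x : 'I_(k n.-1.+1) -> M,
    (forall j : 'I_(k n.-1), \sum_l ((A n.-1 l j : R^c) *: x l) = 0) ->
    exists s : seq (M * 'rV[R]_(k n.-1.+1)),
      (forall t, t \in s -> t.2 *m A n.-1 = 0) /\
      forall l, x l = \sum_(t <- s) ((t.2 0 l : R^c) *: t.1).

(* A right module M is n-X-flat: Tor_n(M, N) = 0 for all N in X_n
   (for every n-presentation of N; Tor does not depend on it). *)
Definition n_X_flat (R : pzRingType) (X : lmodType R -> Prop) (n : nat)
  (M : lmodType R^c) : Prop :=
  forall N : lmodType R, forall P : presentation N n, X N -> Tor_vanishes M P.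

Definition n_X_flat_preenvelope (R : pzRingType) (X : lmodType R -> Prop)
  (n : nat) (M F : lmodType R^c) (phi : {linear M -> F}) : Prop :=
  n_X_flat X n F /\
  forall (F' : lmodType R^c) (phi' : {linear M -> F'}), n_X_flat X n F' ->
    exists f : {linear F -> F'}, forall x : M, phi' x = f (phi x).

Definition has_n_X_flat_preenvelope (R : pzRingType) (X : lmodType R -> Prop)
  (n : nat) (M : lmodType R^c) : Prop :=
  exists (F : lmodType R^c) (phi : {linear M -> F}),
    n_X_flat_preenvelope X n phi.

(* Coherent implies preenvelopes: for N in X_n, coherence makes the top kernel
   of an n-presentation finitely generated, by the rows of some matrix B, so
   Tor_n(F, N) = 0 becomes the lifting condition "every x with x A = 0
   factors through B".  A class cut out by such conditions has preenvelopes: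
   take the module generated by M and by formal lifts, modulo the identities
   valid in every interpretation; it satisfies the conditions by construction,
   and a map from M into an n-X-flat module extends by choosing actual lifts.
   Preenvelopes imply coherent: R is n-X-flat, hence so is every power R^K,
   being a retract of its preenvelope.  For K the top kernel of an
   n-presentation of N in X_n, Tor-vanishing on the tautological element of
   R^K writes all of K through finitely many of its elements, and the
   presentation extends by one step. *)

From HB Require Import structures.
From mathcomp Require Import all_boot all_order all_algebra.
From mathcomp Require Import boolp functions.
Set Implicit Arguments. Unset Strict Implicit. Unset Printing Implicit Defensive.
Import GRing.Theory.
Local Open Scope ring_scope.

#[local] Arguments pres_g {R N m} p _.
#[local] Arguments pres_exact0 {R N m} p _ v.
#[local] Arguments pres_exact {R N m} p {i} _ v.

Section LinearCombinations.
Variables (R : pzRingType) (N : lmodType R).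

Lemma comb_mulmx a b p (g : 'I_a -> N) (h : 'I_b -> N) (f : 'M[R]_(a, b))
    (Y : 'M[R]_(p, a)) r :
  (forall j, g j = \sum_l f j l *: h l) ->
  \sum_l (Y *m f) r l *: h l = \sum_j Y r j *: g j.
Proof.
move=> gE; under eq_bigr => l _ do rewrite mxE scaler_suml.
rewrite exchange_big /=; apply: eq_bigr => j _.
by rewrite gE scaler_sumr; apply: eq_bigr => l _; rewrite scalerA.
Qed.

Lemma comb_mx1 a (g : 'I_a -> N) r : \sum_l (1%:M : 'M[R]_a) r l *: g l = g r.
Proof.
rewrite (bigD1 r) //= big1 ?addr0; first by rewrite mxE eqxx scale1r.
by move=> l /negbTE nrl; rewrite mxE eq_sym nrl scale0r.
Qed.

Lemma pres_gen_change m1 m2 (P : presentation N m1) (Q : presentation N m2) :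
  exists f : 'M[R]_(pres_k P 0, pres_k Q 0),
    forall j, pres_g P j = \sum_l f j l *: pres_g Q l.
Proof.
have [w wE] := fin_all_exists (fun j => pres_surj Q (pres_g P j)).
by exists (\matrix_j w j) => j; rewrite wE; apply: eq_bigr => l _; rewrite !mxE.
Qed.

End LinearCombinations.

Definition mx_exact (R : pzRingType) a b c (A : 'M[R]_(a, b)) (B : 'M[R]_(c, a)) :=
  forall v : 'rV[R]_a, v *m A = 0 <-> exists w, v = w *m B.

Section Cycles.
Variables (R : pzRingType) (N : lmodType R) (m : nat) (P : presentation N m).
Local Notation k := (pres_k P).
Local Notation A := (pres_A P).

Definition cycles (i p : nat) : 'M[R]_(p, k i) -> Prop :=
  match i return 'M[R]_(p, k i) -> Prop with
  | 0 => fun Y => forall r, \sum_j Y r j *: pres_g P j = 0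
  | j.+1 => fun Y => Y *m A j = 0
  end.

Lemma cyclesMl i p q (Z : 'M[R]_(q, p)) Y : @cycles i p Y -> cycles (Z *m Y).
Proof.
case: i Y => [|j] Y /= Y0; last by rewrite -mulmxA Y0 mulmx0.
move=> r; rewrite (comb_mulmx (g := fun s => \sum_j Y s j *: pres_g P j)) //.
by rewrite big1 // => s _; rewrite Y0 scaler0.
Qed.

Lemma cyclesP i p (Y : 'M[R]_(p, k i)) : cycles Y <-> forall r, cycles (row r Y).
Proof.
case: i Y => [|j] Y /=; split.
- by move=> Y0 r r0; under eq_bigr do rewrite mxE; exact: Y0.
- by move=> Y0 r; have := Y0 r ord0; under eq_bigr do rewrite mxE.
- by move=> Y0 r; rewrite -row_mul Y0; apply/rowP => l; rewrite !mxE.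
- move=> Y0; apply/row_matrixP => r.
  by rewrite row_mul Y0; apply/rowP => l; rewrite !mxE.
Qed.

Lemma cycle_boundary i (v : 'rV[R]_(k i)) : (i < m)%N -> cycles v ->
  exists w : 'rV[R]_(k i.+1), v = w *m A i.
Proof.
case: i v => [|j] v /= im v0; last exact/(pres_exact P im).
by apply/(pres_exact0 P im); have := v0 ord0.
Qed.

Lemma cycles_boundary i p (Y : 'M[R]_(p, k i)) : (i < m)%N -> cycles Y ->
  exists Z : 'M[R]_(p, k i.+1), Y = Z *m A i.
Proof.
move=> im /cyclesP Y0.
have [w wE] := fin_all_exists (fun r => cycle_boundary im (Y0 r)).
exists (\matrix_r w r); apply/row_matrixP => r.
by rewrite row_mul rowK -wE.
Qed.

Lemma cycles_pres_A i : (i < m)%N -> cycles (A i).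
Proof.
move=> im; apply/cyclesP => r; rewrite rowE.
case: i im r => [|j] im r /=; last by apply/(pres_exact P im); exists (delta_mx 0 r).
move=> r0.
have /(_ (ex_intro _ _ erefl)) := (pres_exact0 P im (delta_mx 0 r *m A 0)).2.
move=> {2}<-; apply: eq_bigr => l _; rewrite (ord1 r0) !mxE.
by congr (_ *: _); apply: eq_bigr => s _; rewrite !mxE.
Qed.

End Cycles.

Definition cycle_map (R : pzRingType) (N : lmodType R) m m'
    (P : presentation N m) (Q : presentation N m') i
    (f : 'M[R]_(pres_k P i, pres_k Q i)) :=
  forall p (Y : 'M[R]_(p, pres_k P i)), cycles Y -> cycles (Y *m f).
Arguments cycle_map {R N m m'} P Q {i} f.

Section Comparison.
Variables (R : pzRingType) (N : lmodType R) (m1 m2 : nat)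
  (P : presentation N m1) (Q : presentation N m2).
Local Notation kP := (pres_k P).
Local Notation AP := (pres_A P).

(* [f] and [g] lift the identity of [N]. Since [E] consists of cycles, at
   the next level it is a boundary [A_i h], and [1 - f' g' - A_i h] takes its
   place. *)
Definition comparison i := exists (f : 'M[R]_(kP i, pres_k Q i))
    (g : 'M[R]_(pres_k Q i, kP i)) (E : 'M[R]_(kP i, kP i)),
  [/\ cycle_map P Q f, cycle_map Q P g, cycles E &
      forall p (Y : 'M[R]_(p, kP i)), cycles Y -> Y *m E = Y - Y *m f *m g].

Lemma comparison0 : comparison 0.
Proof.
have [f fE] := pres_gen_change P Q; have [g gE] := pres_gen_change Q P.
exists f, g, (1%:M - f *m g); split.
- by move=> p Y /= Y0 r; rewrite (comb_mulmx (g := pres_g P)).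
- by move=> p Y /= Y0 r; rewrite (comb_mulmx (g := pres_g Q)).
- move=> r /=; rewrite (eq_bigr (fun j => (1%:M : 'M_(kP 0)) r j *: pres_g P j
                                        - (f *m g) r j *: pres_g P j)).
    by rewrite sumrB comb_mx1 (comb_mulmx (g := pres_g Q)) // -fE subrr.
  by move=> j _; rewrite -scalerBl !mxE.
- by move=> p Y _; rewrite mulmxBr mulmx1 mulmxA.
Qed.

Lemma comparisonS i : (i < m1)%N -> (i < m2)%N -> comparison i -> comparison i.+1.
Proof.
move=> im1 im2 [f [g [E [fC gC EC EE]]]].
have [h hE] := cycles_boundary im1 EC.
have [f' f'E] := cycles_boundary im2 (fC _ _ (cycles_pres_A P im1)).
have [g' g'E] := cycles_boundary im1 (gC _ _ (cycles_pres_A Q im2)).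
exists f', g', (1%:M - f' *m g' - AP i *m h); split.
- by move=> p Y /= Y0; rewrite -mulmxA -f'E mulmxA Y0 mul0mx.
- by move=> p Y /= Y0; rewrite -mulmxA -g'E mulmxA Y0 mul0mx.
- rewrite /= !mulmxBl mul1mx -!mulmxA -g'E -hE !mulmxA -f'E.
  by rewrite (EE _ _ (cycles_pres_A P im1)) subrr.
- by move=> p Y /= Y0; rewrite !mulmxBr mulmx1 !mulmxA Y0 mul0mx subr0.
Qed.

Lemma comparison_le i : (i <= m1)%N -> (m1 <= m2)%N -> comparison i.
Proof.
elim: i => [|i IH] im1 m12; first exact: comparison0.
exact: comparisonS im1 (leq_trans im1 m12) (IH (ltnW im1) m12).
Qed.

End Comparison.

(* Schanuel-type argument: a cycle [v] of [P] equals [v E + (v f) g], and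
   [v f] is a boundary of [Q]. *)
Lemma pres_ker_fg (R : pzRingType) (N : lmodType R) m
    (P : presentation N m.+1) (Q : presentation N m.+2) :
  exists c (B : 'M[R]_(c, pres_k P m.+1)), mx_exact (pres_A P m) B.
Proof.
have [f [g [E [fC gC EC EE]]]] := comparison_le P Q (leqnn _) (leqnSn _).
exists (pres_k P m.+1 + pres_k Q m.+2)%N, (col_mx E (pres_A Q m.+1 *m g)) => v.
split=> [v0|[w ->]].
  have [w' w'E] := cycle_boundary (ltnSn _) (fC _ v v0).
  exists (row_mx v w'); rewrite mul_row_col mulmxA -w'E -mulmxA.
  by rewrite (EE _ v v0) mulmxA addrNK.
have Ag0 : pres_A Q m.+1 *m g *m pres_A P m = 0 by exact: gC (cycles_pres_A Q _).
by rewrite -mulmxA mul_col_mx Ag0 [E *m _]EC col_mx0 mulmx0.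
Qed.

(* The [(r, s)] entry of [M], read off natural-number indices ([0] out of
   range); it lets matrices of dependently computed sizes be given entrywise. *)
Definition nat_entry (R : pzRingType) p q (M : 'M[R]_(p, q)) (r s : nat) : R :=
  match (insub r : option 'I_p), (insub s : option 'I_q) with
  | Some r', Some s' => M r' s'
  | _, _ => 0
  end.

Lemma nat_entry_mx (R : pzRingType) p q (M M' : 'M[R]_(p, q)) :
  (forall r s, M' r s = nat_entry M r s) -> M' = M.
Proof. by move=> M'E; apply/matrixP => r s; rewrite M'E /nat_entry !valK. Qed.

Section DimensionTransport.
Variables (R : pzRingType) (a b c a' b' c' : nat).

Lemma mx_exact_nat_entry (A : 'M[R]_(a, b)) (B : 'M[R]_(c, a))
    (A' : 'M[R]_(a', b')) (B' : 'M[R]_(c', a')) :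
  mx_exact A B -> a' = a -> b' = b -> c' = c ->
  (forall r s, A' r s = nat_entry A r s) -> (forall r s, B' r s = nat_entry B r s) ->
  mx_exact A' B'.
Proof. by move=> AB ea eb ec; subst => /nat_entry_mx -> /nat_entry_mx ->. Qed.

Lemma mx_image_nat_entry (A : 'M[R]_(c, a)) (A' : 'M[R]_(c', a)) (v : 'rV[R]_a) :
  c' = c -> (forall r s, A' r s = nat_entry A r s) ->
  (exists w, v = w *m A') <-> (exists w, v = w *m A).
Proof. by move=> ec; subst => /nat_entry_mx ->. Qed.

End DimensionTransport.

Section Splice.
Variables (R : pzRingType) (N : lmodType R) (m : nat) (P : presentation N m.+1)
  (c : nat) (B : 'M[R]_(c, pres_k P m.+1)) (B_ker : mx_exact (pres_A P m) B).
Local Notation k := (pres_k P).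
Local Notation A := (pres_A P).

Definition splice_k i := if (i <= m.+1)%N then k i else c.

Definition splice_A i : 'M[R]_(splice_k i.+1, splice_k i) :=
  \matrix_(r, s) if (i <= m)%N then nat_entry (A i) r s else nat_entry B r s.

Lemma splice_kE i : (i <= m.+1)%N -> splice_k i = k i.
Proof. by rewrite /splice_k => ->. Qed.

Lemma splice_exact i : (i.+2 <= m.+2)%N -> mx_exact (splice_A i) (splice_A i.+1).
Proof.
move=> im; have [ltim|leim] := ltnP i m.
  have Ai_exact : mx_exact (A i) (A i.+1) := pres_exact P ltim.
  refine (mx_exact_nat_entry Ai_exact _ _ _ _ _).
  - by rewrite splice_kE.
  - by rewrite splice_kE // ltnW.
  - by rewrite splice_kE.
  - by move=> r s; rewrite mxE (ltnW ltim).
  - by move=> r s; rewrite mxE ltim.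
have -> : i = m by apply/eqP; rewrite eqn_leq leim andbT; exact: im.
refine (mx_exact_nat_entry B_ker _ _ _ _ _).
- by rewrite splice_kE.
- by rewrite splice_kE // leqW.
- by rewrite /splice_k ltnn.
- by move=> r s; rewrite mxE leqnn.
- by move=> r s; rewrite mxE ltnn.
Qed.

Lemma splice_exact0 : (0 < m.+2)%N -> forall v : 'rV[R]_(splice_k 0),
  (\sum_j v 0 j *: pres_g P j = 0) <-> exists w, v = w *m splice_A 0.
Proof.
move=> _ v; rewrite (pres_exact0 P (ltn0Sn m)).
by apply: iff_sym; apply: mx_image_nat_entry => // r s; rewrite mxE.
Qed.

Definition splice : presentation N m.+2 :=
  @Presentation R N m.+2 splice_k splice_A (pres_g P) (pres_surj P)
    splice_exact0 splice_exact.

End Splice.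

Section FlatClosure.
Variables (R : pzRingType) (X : lmodType R -> Prop) (n : nat).

Lemma n_X_flat_regular : n_X_flat X n R^c^o.
Proof.
move=> N P _; rewrite /Tor_vanishes /= => x x0.
exists [:: (1 : R^c^o, \row_l (x l : R))]; split.
  move=> t; rewrite inE => /eqP -> /=; apply/rowP => j; rewrite !mxE.
  by under eq_bigr do rewrite mxE; exact: x0.
by move=> l; rewrite big_seq1 /= mxE; exact: (esym (mulr1 (x l : R^c))).
Qed.

Lemma n_X_flat_retract (M F : lmodType R^c) (phi : {linear M -> F})
    (psi : {linear F -> M}) :
  n_X_flat X n F -> cancel phi psi -> n_X_flat X n M.
Proof.
move=> F_flat phiK N P XN; rewrite /Tor_vanishes /= => x x0.
have phix0 j : \sum_l ((pres_A P n.-1 l j : R^c) *: phi (x l)) = 0.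
  rewrite -[RHS](linear0 phi) -(x0 j) linear_sum.
  by apply: eq_bigr => l _; rewrite linearZ.
have [s [sK sE]] := F_flat N P XN (fun l => phi (x l)) phix0.
exists [seq (psi t.1, t.2) | t <- s]; split.
  by move=> t /mapP [u us ->]; exact: sK.
move=> l; rewrite -[x l]phiK sE linear_sum big_map; apply: eq_bigr => t _.
by rewrite linearZ.
Qed.

Section Power.
Variable I : Type.

Definition coord (i : I) (f : I -> R^c^o) : R^c^o := f i.
HB.instance Definition _ i := GRing.isLinear.Build R^c (I -> R^c^o) R^c^o *:%R
  (coord i) (fun _ _ _ => erefl).

Definition tuple_lin (F : lmodType R^c) (fam : I -> {linear F -> R^c^o})
  (y : F) : I -> R^c^o := fun i => fam i y.
Lemma tuple_lin_is_linear F fam : linear_for *:%R (@tuple_lin F fam).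
Proof. by move=> r u v; apply: funext => i; rewrite /tuple_lin linearP. Qed.
HB.instance Definition _ F fam := GRing.isLinear.Build R^c F (I -> R^c^o) *:%R
  (@tuple_lin F fam) (tuple_lin_is_linear fam).

Lemma n_X_flat_power : has_n_X_flat_preenvelope X n (I -> R^c^o) ->
  n_X_flat X n (I -> R^c^o).
Proof.
move=> [F [phi [F_flat phi_univ]]].
have coord_factors i : exists f : {linear F -> R^c^o},
    forall x, coord i x = f (phi x).
  by apply: phi_univ; exact: n_X_flat_regular.
have [fam famE] := choice coord_factors.
apply: (n_X_flat_retract (phi := phi) (psi := tuple_lin fam) F_flat) => x.
by apply: funext => i; rewrite [RHS]famE.
Qed.

End Power.
End FlatClosure.

(* The tautological Tor-cycle of [R^K] is the family of coordinate functions
   [a |-> a_l] on [K]. *)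
Lemma pres_ker_fg_of_flat_power (R : pzRingType) (X : lmodType R -> Prop) m
    (N : lmodType R) (P : presentation N m.+1) :
  X N ->
  n_X_flat X m.+1 ({a : 'rV[R]_(pres_k P m.+1) | a *m pres_A P m = 0} -> R^c^o) ->
  exists c (B : 'M[R]_(c, pres_k P m.+1)), mx_exact (pres_A P m) B.
Proof.
move=> XN K_flat; set A := pres_A P m in K_flat *.
pose K := {a : 'rV[R]_(pres_k P m.+1) | a *m A = 0}.
pose x l (a : K) : R^c^o := sval a 0 l.
have x0 j : \sum_l ((A l j : R^c) *: x l) = 0.
  apply: funext => a; rewrite fct_sumE.
  by have := congr1 (fun v : 'rV[R]_(pres_k P m) => v 0 j) (svalP a); rewrite !mxE.
have [s [sK sE]] := K_flat N P XN x x0.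
have aE (a : K) : sval a = \sum_(t <- s) ((t.1 a : R) *: t.2).
  apply/rowP => l; rewrite summxE; transitivity (x l a) => //.
  by rewrite sE fct_sumE; apply: eq_bigr => t _; rewrite mxE.
exists (size s), (\matrix_(i < size s) (nth (0, 0) s i).2) => v; split=> [v0|[w ->]].
  exists (\row_i ((nth (0, 0) s i).1 (exist _ v v0) : R)).
  rewrite mulmx_sum_row [LHS](aE (exist _ v v0)) (big_nth (0, 0)) big_mkord.
  by apply: eq_bigr => i _; rewrite rowK mxE.
rewrite -mulmxA; suff -> : (\matrix_(i < size s) (nth (0, 0) s i).2) *m A = 0.
  by rewrite mulmx0.
by apply/row_matrixP => i; rewrite row_mul rowK row0; apply/sK/mem_nth.
Qed.

Lemma n_presented_of_preenvelopes (R : pzRingType) (X : lmodType R -> Prop) m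
    (N : lmodType R) :
  (forall M : lmodType R^c, has_n_X_flat_preenvelope X m.+1 M) ->
  in_Xn X m.+1 N -> n_presented N m.+2.
Proof.
move=> envelopes [XN [P]].
have [c [B B_ker]] := pres_ker_fg_of_flat_power (P := P) XN
  (n_X_flat_power (envelopes _)).
by constructor; exact: splice B_ker.
Qed.

Definition flat_lifting (R : pzRingType) (X : lmodType R -> Prop) n a b c
    (A : 'M[R]_(a, b)) (B : 'M[R]_(c, a)) :=
  forall F : lmodType R^c, n_X_flat X n F -> forall x : 'I_a -> F,
  (forall j, \sum_l ((A l j : R^c) *: x l) = 0) ->
  exists y : 'I_c -> F, forall l, x l = \sum_u ((B u l : R^c) *: y u).

Lemma flat_lifting_ker (R : pzRingType) (X : lmodType R -> Prop) m
    (N : lmodType R) (P : presentation N m.+1) c (B : 'M[R]_(c, pres_k P m.+1)) :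
  X N -> mx_exact (pres_A P m) B -> flat_lifting X m.+1 (pres_A P m) B.
Proof.
move=> XN B_ker F F_flat x x0.
have [s [sK sE]] := F_flat N P XN x x0.
have lift_ker (v : 'rV[R]_(pres_k P m.+1)) :
    exists w : 'rV[R]_c, v *m pres_A P m = 0 -> v = w *m B.
  have [/(B_ker v).1 [w ->]|v0] := pselect (v *m pres_A P m = 0); first by exists w.
  by exists 0 => /v0.
have [W WE] := choice lift_ker.
exists (fun u => \sum_(t <- s) ((W t.2 0 u : R^c) *: t.1)) => l.
rewrite sE; under [RHS]eq_bigr do rewrite scaler_sumr.
rewrite exchange_big /=; apply: eq_big_seq => t ts.
under eq_bigr do rewrite scalerA.
by rewrite -scaler_suml {1}(WE _ (sK t ts)) mxE.
Qed.

(* [Glift A B xs u] stands for the [u]-th coordinate of a lift of the family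
   [xs] through [B]. An element of [envelope] is the class of a term under
   equality in every model, represented as a predicate so that no quotient
   library is needed. *)
Section Envelope.
Variables (R : pzRingType) (X : lmodType R -> Prop) (m : nat) (M : lmodType R^c).

Inductive env_gen : Type :=
| Gin : M -> env_gen
| Glift : forall a b c, 'M[R]_(a, b) -> 'M[R]_(c, a) ->
    ('I_a -> seq (R^c * env_gen)) -> 'I_c -> env_gen.

Definition env_term := seq (R^c * env_gen).

Definition env_eval (F : lmodType R^c) (v : env_gen -> F) (t : env_term) : F :=
  \sum_(p <- t) p.1 *: v p.2.

Definition env_model (F : lmodType R^c) (v : env_gen -> F) : Prop :=
  [/\ {morph (fun x => v (Gin x)) : x y / x + y},
      (forall r x, v (Gin (r *: x)) = r *: v (Gin x)) &
      forall a b c (A : 'M[R]_(a, b)) (B : 'M[R]_(c, a)) (xs : 'I_a -> env_term),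
        flat_lifting X m.+1 A B ->
        (forall j, \sum_l ((A l j : R^c) *: env_eval v (xs l)) = 0) ->
        forall l, env_eval v (xs l) = \sum_u ((B u l : R^c) *: v (Glift A B xs u))].

Definition env_equiv (t1 t2 : env_term) : Prop :=
  forall (F : lmodType R^c) (v : env_gen -> F), env_model v ->
    env_eval v t1 = env_eval v t2.

Definition envelope := {Q : env_term -> Prop | exists t, Q = env_equiv t}.
HB.instance Definition _ := gen_eqMixin envelope.
HB.instance Definition _ := gen_choiceMixin envelope.

Definition env_of (t : env_term) : envelope :=
  exist _ (env_equiv t) (ex_intro _ t erefl).
Definition env_rep (f : envelope) : env_term := sval (cid (svalP f)).

Lemma env_repK : cancel env_rep env_of.
Proof.
move=> [Q Qt]; rewrite /env_rep; case: (cid _) => t /= QE; subst Q.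
by rewrite /env_of; congr exist.
Qed.

Lemma env_of_eq t1 t2 : env_equiv t1 t2 -> env_of t1 = env_of t2.
Proof.
move=> t12; have eqv : env_equiv t1 = env_equiv t2.
  apply: funext => t; apply: propext; split=> t_eq F v vM.
    by rewrite -(t12 F v vM) (t_eq F v vM).
  by rewrite (t12 F v vM) (t_eq F v vM).
by rewrite /env_of; move: (ex_intro _ t1 _); rewrite eqv => ?; congr exist.
Qed.

Lemma env_of_equiv t1 t2 : env_of t1 = env_of t2 -> env_equiv t1 t2.
Proof. by move=> /(congr1 sval) /= ->. Qed.

Definition env_sem (F : lmodType R^c) (v : env_gen -> F) (f : envelope) : F :=
  env_eval v (env_rep f).

Lemma env_sem_of (F : lmodType R^c) (v : env_gen -> F) t :
  env_model v -> env_sem v (env_of t) = env_eval v t.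
Proof. exact: env_of_equiv (env_repK (env_of t)) F v. Qed.

Lemma env_semP (f g : envelope) :
  (forall (F : lmodType R^c) (v : env_gen -> F), env_model v ->
    env_sem v f = env_sem v g) -> f = g.
Proof. by move=> fg; rewrite -(env_repK f) -(env_repK g); apply: env_of_eq. Qed.

End Envelope.

Section EnvelopeModule.
Variables (R : pzRingType) (X : lmodType R -> Prop) (m : nat) (M : lmodType R^c).
Local Notation envelope := (envelope X m M).
Local Notation env_of := (@env_of R X m M).
Local Notation env_rep := (@env_rep R X m M).

Lemma env_eval_cat (F : lmodType R^c) (v : env_gen M -> F) s1 s2 :
  env_eval v (s1 ++ s2) = env_eval v s1 + env_eval v s2.
Proof. by rewrite /env_eval big_cat. Qed.

Lemma env_eval_scale (F : lmodType R^c) (v : env_gen M -> F) (r : R^c) t :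
  env_eval v [seq (r * p.1, p.2) | p <- t] = r *: env_eval v t.
Proof.
by rewrite /env_eval big_map scaler_sumr; apply: eq_bigr => p _; rewrite scalerA.
Qed.

Lemma env_eval_single (F : lmodType R^c) (v : env_gen M -> F) g :
  env_eval v [:: (1, g)] = v g.
Proof. by rewrite /env_eval big_seq1 scale1r. Qed.

Definition env_zero : envelope := env_of [::].
Definition env_add (f g : envelope) : envelope := env_of (env_rep f ++ env_rep g).
Definition env_scale (r : R^c) (f : envelope) : envelope :=
  env_of [seq (r * p.1, p.2) | p <- env_rep f].
Definition env_opp (f : envelope) : envelope := env_scale (-1) f.

Section Semantics.
Variables (F : lmodType R^c) (v : env_gen M -> F) (vM : env_model X m v).

Lemma env_sem0 : env_sem v env_zero = 0.
Proof. by rewrite env_sem_of // /env_eval big_nil. Qed.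

Lemma env_semD f g : env_sem v (env_add f g) = env_sem v f + env_sem v g.
Proof. by rewrite env_sem_of // env_eval_cat. Qed.

Lemma env_semZ r f : env_sem v (env_scale r f) = r *: env_sem v f.
Proof. by rewrite env_sem_of // env_eval_scale. Qed.

Lemma env_semN f : env_sem v (env_opp f) = - env_sem v f.
Proof. by rewrite env_semZ scaleN1r. Qed.

End Semantics.

Lemma env_addA : associative env_add.
Proof. by move=> f g h; apply: env_semP => F v vM; rewrite !env_semD // addrA. Qed.

Lemma env_addC : commutative env_add.
Proof. by move=> f g; apply: env_semP => F v vM; rewrite !env_semD // addrC. Qed.

Lemma env_add0 : left_id env_zero env_add.
Proof.
by move=> f; apply: env_semP => F v vM; rewrite env_semD // env_sem0 // add0r.
Qed.

Lemma env_addN : left_inverse env_zero env_opp env_add.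
Proof.
move=> f; apply: env_semP => F v vM.
by rewrite env_semD // env_semN // env_sem0 // addNr.
Qed.

HB.instance Definition _ :=
  GRing.isZmodule.Build envelope env_addA env_addC env_add0 env_addN.

Lemma env_scaleA a b f : env_scale a (env_scale b f) = env_scale (a * b) f.
Proof. by apply: env_semP => F v vM; rewrite !env_semZ // scalerA. Qed.

Lemma env_scale1 : left_id 1 env_scale.
Proof. by move=> f; apply: env_semP => F v vM; rewrite env_semZ // scale1r. Qed.

Lemma env_scaleDr : right_distributive env_scale +%R.
Proof.
move=> r f g; apply: env_semP => F v vM.
by rewrite /= env_semZ // !env_semD // !env_semZ // scalerDr.
Qed.

Lemma env_scaleDl f : {morph env_scale^~ f : a b / a + b}.
Proof.
move=> a b; apply: env_semP => F v vM.
by rewrite /= env_semD // !env_semZ // scalerDl.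
Qed.

HB.instance Definition _ := GRing.Zmodule_isLmodule.Build R^c envelope
  env_scaleA env_scale1 env_scaleDr env_scaleDl.

Lemma env_sem_sum (F : lmodType R^c) (v : env_gen M -> F) I (r : seq I)
    (f : I -> envelope) : env_model X m v ->
  env_sem v (\sum_(i <- r) f i) = \sum_(i <- r) env_sem v (f i).
Proof.
by move=> vM; apply: (big_morph (env_sem v)); [exact: env_semD | exact: env_sem0].
Qed.

Definition env_in (x : M) : envelope := env_of [:: (1, Gin x)].

Lemma env_in_is_linear : linear_for *:%R env_in.
Proof.
move=> r x y; apply: env_semP => F v vM; have [vD vZ _] := vM.
by rewrite env_semD // env_semZ // !env_sem_of // !env_eval_single vD vZ.
Qed.
HB.instance Definition _ :=
  GRing.isLinear.Build R^c M envelope *:%R env_in env_in_is_linear.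

End EnvelopeModule.

Section EnvelopeUniversal.
Variables (R : pzRingType) (X : lmodType R -> Prop) (m : nat) (M : lmodType R^c).
Variables (F : lmodType R^c) (F_flat : n_X_flat X m.+1 F) (phi : {linear M -> F}).

Lemma flat_lift_choice a b c (A : 'M[R]_(a, b)) (B : 'M[R]_(c, a)) (xs : 'I_a -> F) :
  exists y : 'I_c -> F,
    flat_lifting X m.+1 A B -> (forall j, \sum_l ((A l j : R^c) *: xs l) = 0) ->
    forall l, xs l = \sum_u ((B u l : R^c) *: y u).
Proof.
have [AB|nAB] := pselect (flat_lifting X m.+1 A B); last first.
  by exists (fun _ => 0) => /nAB.
have [xs0|nxs0] := pselect (forall j, \sum_l ((A l j : R^c) *: xs l) = 0).
  by have [y yE] := AB F F_flat xs xs0; exists y.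
by exists (fun _ => 0) => _ /nxs0.
Qed.

Definition flat_lift a b c (A : 'M[R]_(a, b)) (B : 'M[R]_(c, a)) (xs : 'I_a -> F) :
  'I_c -> F := sval (cid (flat_lift_choice A B xs)).

(* [env_eval] written as a local fixpoint, so that [env_val] below is
   structurally recursive through the nested [seq]. *)
Definition env_eval_rec (val : env_gen M -> F) := fix ev (t : env_term M) : F :=
  if t is (r, g) :: t' then r *: val g + ev t' else 0.

Fixpoint env_val (g : env_gen M) : F :=
  match g with
  | Gin x => phi x
  | Glift a b c A B xs u => flat_lift A B (fun l => env_eval_rec env_val (xs l)) u
  end.

Lemma env_eval_recE t : env_eval env_val t = env_eval_rec env_val t.
Proof.
elim: t => [|[r g] t IH]; first by rewrite /env_eval big_nil.
by rewrite /env_eval big_cons /= -IH.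
Qed.

Lemma env_model_val : env_model X m env_val.
Proof.
split=> [x y|r x|a b c A B xs AB xs0 l] /=; rewrite ?linearD ?linearZ //.
rewrite env_eval_recE; apply: (svalP (cid (flat_lift_choice _ _ _))) => // j.
by under eq_bigr do rewrite -env_eval_recE; exact: xs0.
Qed.

Definition env_lift (f : envelope X m M) : F := env_sem env_val f.

Lemma env_lift_is_linear : linear_for *:%R env_lift.
Proof.
by move=> r f g; rewrite /env_lift env_semD ?env_semZ //; exact: env_model_val.
Qed.
HB.instance Definition _ :=
  GRing.isLinear.Build R^c (envelope X m M) F *:%R env_lift env_lift_is_linear.

Lemma env_lift_in x : env_lift (env_in X m x) = phi x.
Proof.
by rewrite /env_lift env_sem_of ?env_eval_single //; exact: env_model_val.
Qed.

End EnvelopeUniversal.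

Lemma n_X_flat_envelope (R : pzRingType) (X : lmodType R -> Prop) m
    (M : lmodType R^c) :
  left_n_X_coherent X m.+1 -> n_X_flat X m.+1 (envelope X m M).
Proof.
move=> [_ coherent] N P XN; rewrite /Tor_vanishes /= => x x0.
have [Q] : n_presented N m.+2 by apply: coherent; split=> //; constructor.
have [c [B B_ker]] := pres_ker_fg P Q.
have AB := flat_lifting_ker XN B_ker.
pose y u : envelope X m M :=
  env_of X m [:: (1, Glift (pres_A P m) B (fun l => env_rep (x l)) u)].
have xE l : x l = \sum_u ((B u l : R^c) *: y u).
  apply: env_semP => F v vM; rewrite env_sem_sum //.
  under [RHS]eq_bigr do rewrite env_semZ // env_sem_of // env_eval_single.
  have [_ _ v_lift] := vM; apply: (v_lift _ _ _ _ _ _ AB) => j.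
  have := congr1 (env_sem v) (x0 j).
  rewrite env_sem_sum // [RHS](env_sem0 vM) => {2}<-.
  by apply: eq_bigr => l' _; rewrite env_semZ.
exists [seq (y u, row u B) | u <- index_enum 'I_c]; split.
  move=> t /mapP [u _ ->]; apply/(B_ker _).2.
  by exists (delta_mx 0 u); rewrite -rowE.
by move=> l; rewrite big_map xE; apply: eq_bigr => u _; rewrite mxE.
Qed.

Lemma preenvelope_of_coherent (R : pzRingType) (X : lmodType R -> Prop) m
    (M : lmodType R^c) :
  left_n_X_coherent X m.+1 -> has_n_X_flat_preenvelope X m.+1 M.
Proof.
move=> coherent; exists (envelope X m M).
exists (GRing.Linear.clone _ _ _ _ (@env_in R X m M) _); split.
  exact: n_X_flat_envelope.
move=> F phi F_flat; exists (GRing.Linear.clone _ _ _ _ (env_lift F_flat phi) _).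
by move=> x; rewrite /= env_lift_in.
Qed.

Theorem theorem2p16 (R : pzRingType) (X : lmodType R -> Prop) (n : nat) :
  (1 <= n)%N ->
  (exists N : lmodType R, in_Xn X n N) ->
  (left_n_X_coherent X n <->
   forall M : lmodType R^c, has_n_X_flat_preenvelope X n M).
Proof.
case: n => [//|m] _ Xn_nonempty; split=> [coherent M|envelopes].
  exact: preenvelope_of_coherent coherent.
split=> [//|N]; exact: n_presented_of_preenvelopes envelopes.
Qed.
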